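(* Let $C\ge 0$ and let $(D^n,f)$ be an Ameso($C$) pair with $D^n\subseteq\mathbb{Z}^n$. Then for all $\vec x,\vec a\in\mathbb{Z}^n$ with $\vec x,\vec x+\vec a,\vec x-\vec a\in D^n$, $f(\vec x+\vec a)+f(\vec x-\vec a)+C\ge 2f(\vec x)$.
   Context: Floors and ceilings of vectors are taken componentwise. A set $D^n\subseteq\mathbb{Z}^n$ is an Ameso set if $\lceil(\vec x+\vec y)/2\rceil,\lfloor(\vec x+\vec y)/2\rfloor\in D^n$ for all $\vec x,\vec y\in D^n$. For $C\ge 0$, $(D^n,f)$ is an Ameso($C$) pair if $D^n$ is an Ameso set, $f:D^n\to\mathbb{R}$ is bounded below, and $f(\vec x)+f(\vec y)+C\ge f(\lceil(\vec x+\vec y)/2\rceil)+f(\lfloor(\vec x+\vec y)/2\rfloor)$ for all $\vec x,\vec y\in D^n$. *)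

From mathcomp Require Import all_boot all_order all_algebra.
Set Implicit Arguments. Unset Strict Implicit. Unset Printing Implicit Defensive.
Import Order.TTheory GRing.Theory Num.Theory.
Local Open Scope ring_scope.

(* floor(m/2) and ceil(m/2) for an integer m; intdiv's %/ rounds down for a
   positive divisor. *)
Definition floor_half (m : int) : int := (m %/ 2)%Z.
Definition ceil_half (m : int) : int := - ((- m) %/ 2)%Z.

Definition vfloor_mid n (x y : 'rV[int]_n) : 'rV[int]_n :=
  \row_j floor_half (x 0 j + y 0 j).
Definition vceil_mid n (x y : 'rV[int]_n) : 'rV[int]_n :=
  \row_j ceil_half (x 0 j + y 0 j).

Definition Ameso_set n (D : {pred 'rV[int]_n}) : Prop :=
  forall x y, x \in D -> y \in D ->
    vceil_mid x y \in D /\ vfloor_mid x y \in D.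

Definition Ameso_pair (R : realFieldType) (C : R) n
    (D : {pred 'rV[int]_n}) (f : 'rV[int]_n -> R) : Prop :=
  [/\ Ameso_set D,
      (exists m : R, forall x, x \in D -> m <= f x) &
      forall x y, x \in D -> y \in D ->
        f (vceil_mid x y) + f (vfloor_mid x y) <= f x + f y + C].

From mathcomp Require Import all_boot all_order all_algebra.
Import Order.TTheory GRing.Theory Num.Theory.
Local Open Scope ring_scope.

(* The points x + a and x - a have exact midpoint x, so both rounded midpoints
   equal x and the defining inequality of an Ameso(C) pair specialises to the
   claim. *)

Lemma floor_half_double (m : int) : floor_half (m + m) = m.
Proof. by rewrite /floor_half -mulr2z -mulrzr intz mulzK. Qed.

Lemma ceil_half_double (m : int) : ceil_half (m + m) = m.
Proof. by rewrite /ceil_half opprD -/(floor_half _) floor_half_double opprK. Qed.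

Lemma addrBsubr (V : zmodType) (x a : V) : (x + a) + (x - a) = x + x.
Proof. by rewrite addrACA subrr addr0. Qed.

Lemma vfloor_mid_addsub n (x a : 'rV[int]_n) : vfloor_mid (x + a) (x - a) = x.
Proof. by apply/rowP => j; rewrite !mxE addrBsubr floor_half_double. Qed.

Lemma vceil_mid_addsub n (x a : 'rV[int]_n) : vceil_mid (x + a) (x - a) = x.
Proof. by apply/rowP => j; rewrite !mxE addrBsubr ceil_half_double. Qed.

Theorem mainTheorem5 (R : realFieldType) (C : R) (n : nat)
    (D : {pred 'rV[int]_n}) (f : 'rV[int]_n -> R) :
  0 <= C -> Ameso_pair C D f ->
  forall x a : 'rV[int]_n, x \in D -> x + a \in D -> x - a \in D ->
    2 * f x <= f (x + a) + f (x - a) + C.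
Proof.
move=> _ [_ _ f_mid] x a _ Dxa Dxsa.
have := f_mid _ _ Dxa Dxsa.
by rewrite vceil_mid_addsub vfloor_mid_addsub mulr_natl mulr2n.
Qed.
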